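(* Let $(L,\preceq,\bot,\top)$ be a bounded lattice with at least three elements. If $L$ has independent blocks, then $L$ can be decomposed into independent blocks.
   Context: For $k\in L$ let ${\uparrow}k=\{x\in L\mid k\preceq x\}$ and ${\downarrow}k=\{x\in L\mid x\preceq k\}$. A block of $L$ is a sublattice $K\subsetneq L$ (a proper subset) such that $K\setminus\{\bot,\top\}\neq\varnothing$ and $({\uparrow}k\cup{\downarrow}k)\setminus\{\bot,\top\}\subseteq K$ for every $k\in K\setminus\{\bot,\top\}$. Two blocks $K_1,K_2$ are independent if $K_1\cap K_2\subseteq\{\bot,\top\}$; a family of blocks is a family of independent blocks if its members are pairwise independent. $L$ is decomposed into independent blocks if there is a family of independent blocks $\{K_i\}_{i\in I}$ of $L$ with $\bigcup_{i\in I}K_i=L$. *)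

From mathcomp Require Import all_boot all_order.
Set Implicit Arguments. Unset Strict Implicit. Unset Printing Implicit Defensive.
Import Order.Theory.
Local Open Scope order_scope.

Section Blocks.
Context {disp : Order.disp_t} {L : tbLatticeType disp}.

(* Subsets of L (L may be infinite) are Prop-valued predicates. *)
Definition sublattice (K : L -> Prop) : Prop :=
  forall x y, K x -> K y -> K (x `&` y) /\ K (x `|` y).

Definition is_bound (x : L) : Prop := x = \bot \/ x = \top.

Definition block (K : L -> Prop) : Prop :=
  sublattice K /\
  (exists x, ~ K x) /\
  (exists k, K k /\ ~ is_bound k) /\
  (forall k, K k -> ~ is_bound k ->
     forall x, (k <= x \/ x <= k) -> ~ is_bound x -> K x).

Definition independent (K1 K2 : L -> Prop) : Prop :=
  forall x, K1 x -> K2 x -> is_bound x.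

Definition has_independent_blocks : Prop :=
  exists K1 K2 : L -> Prop, block K1 /\ block K2 /\ independent K1 K2.

Definition decomposable_into_independent_blocks : Prop :=
  exists (I : Type) (K : I -> L -> Prop),
    (forall i, block (K i)) /\
    (forall i j, i <> j -> independent (K i) (K j)) /\
    (forall x, exists i, K i x).

End Blocks.

(* Call two elements other than \bot and \top linked when they are comparable.
   Every connected component of this relation, together with \bot and \top,
   is a block: it is closed under comparability by construction, hence a
   sublattice, since x `&` y and x `|` y are comparable with x. Distinct
   components share only the bounds and together they cover L. Finally a
   block is a union of components, so the non-bound elements of two
   independent blocks lie in different components; hence no component is
   all of L. *)

From Stdlib Require Import Classical FunctionalExtensionality PropExtensionality.
From Stdlib Require Import ProofIrrelevance Relation_Operators.
From mathcomp Require Import all_boot all_order.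
Set Implicit Arguments. Unset Strict Implicit. Unset Printing Implicit Defensive.
Import Order.Theory.
Local Open Scope order_scope.

Lemma clos_rst_iff (A : Type) (R : A -> A -> Prop) (P : A -> Prop) :
  (forall x y, R x y -> P x <-> P y) ->
  forall x y, clos_refl_sym_trans A R x y -> P x <-> P y.
Proof. move=> hR x y; elim=> [a b /hR|||] //; tauto. Qed.

Section Components.
Context {disp : Order.disp_t} {L : tbLatticeType disp}.
Implicit Types (K : L -> Prop) (c k x y : L).

Definition linked x y : Prop :=
  [/\ ~ is_bound x, ~ is_bound y & x <= y \/ y <= x].

Definition component c : L -> Prop := clos_refl_sym_trans L linked c.

Definition with_bounds K x : Prop := is_bound x \/ K x.

Lemma block_component K k x :
  block K -> K k -> ~ is_bound k -> component k x -> K x.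
Proof.
move=> [_ [_ [_ closedK]]] Kk nk.
move/(clos_rst_iff (P := fun y => K y /\ ~ is_bound y)) => [|[] //] a b [na nb ab].
by split=> -[Ky ny]; split=> //; apply: (closedK _ Ky ny) => //; tauto.
Qed.

Lemma component_ext c d : component c d -> component c = component d.
Proof.
move=> cd; apply: functional_extensionality => x.
apply: propositional_extensionality; split=> h.
- exact: rst_trans (rst_sym _ _ _ _ cd) h.
- exact: rst_trans cd h.
Qed.

Lemma sublattice_of_comparable_closed K :
  (forall x, is_bound x -> K x) ->
  (forall k x, K k -> ~ is_bound k -> k <= x \/ x <= k -> K x) ->
  sublattice K.
Proof.
move=> Kbound closedK x y Kx Ky.
have [[->|->]|nx] := classic (is_bound x).
- by rewrite meet0x join0x; split=> //; apply: Kbound; left.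
- by rewrite meet1x join1x; split=> //; apply: Kbound; right.
by split; apply: closedK Kx nx _; [right; exact: leIl | left; exact: leUl].
Qed.

Lemma independent_blocks_disconnected K1 K2 :
  block K1 -> block K2 -> independent K1 K2 ->
  exists k1 k2, [/\ ~ is_bound k1, ~ is_bound k2 & ~ component k1 k2].
Proof.
move=> B1 [_ [_ [[k2 [K2k2 nk2]] _]]] indep.
have [_ [_ [[k1 [K1k1 nk1]] _]]] := B1.
exists k1, k2; split=> // k1k2; apply: nk2; apply: indep K2k2.
exact: block_component k1k2.
Qed.

Lemma with_bounds_component_block c :
  ~ is_bound c ->
  (exists k1 k2, [/\ ~ is_bound k1, ~ is_bound k2 & ~ component k1 k2]) ->
  block (with_bounds (component c)).
Proof.
move=> nc [k1 [k2 [nk1 nk2 k1k2]]].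
have closed k x : with_bounds (component c) k -> ~ is_bound k ->
    k <= x \/ x <= k -> ~ is_bound x -> component c x.
  by move=> [//|ck] nk kx nx; apply: rst_trans ck (rst_step _ _ _ _ _).
split; [apply: sublattice_of_comparable_closed|split; [|split]].
- by move=> x; left.
- move=> k x Bk nk kx; have [bx|nx] := classic (is_bound x); first by left.
  by right; apply: closed Bk nk kx nx.
- have [ck1|nck1] := classic (component c k1); last by exists k1 => -[].
  exists k2 => -[//|ck2]; apply: k1k2.
  exact: rst_trans (rst_sym _ _ _ _ ck1) ck2.
- by exists c; split; [right; apply: rst_refl|].
- by move=> k Bk nk x kx nx; right; apply: closed Bk nk kx nx.
Qed.

Lemma with_bounds_component_independent c d :
  ~ component c d ->
  independent (with_bounds (component c)) (with_bounds (component d)).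
Proof.
move=> ncd x [//|cx] [//|dx]; exfalso; apply: ncd.
exact: rst_trans cx (rst_sym _ _ _ _ dx).
Qed.

End Components.

Theorem corollary23 (disp : Order.disp_t) (L : tbLatticeType disp) :
  (exists x y z : L, x <> y /\ y <> z /\ x <> z) ->
  @has_independent_blocks disp L ->
  @decomposable_into_independent_blocks disp L.
Proof.
move=> _ [K1 [K2 [B1 [B2 indep]]]].
have disconnected := independent_blocks_disconnected B1 B2 indep.
have [k1 [_ [nk1 _ _]]] := disconnected.
pose I := {P : L -> Prop | exists2 c, ~ is_bound c & P = component c}.
exists I, (fun i => with_bounds (sval i)); split; [|split].
- by move=> [P [c nc eP]] /=; rewrite eP; apply: with_bounds_component_block.
- move=> [P [c ? eP]] [Q [d ? eQ]] ne /=; rewrite eP eQ.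
  apply: with_bounds_component_independent => cd; apply: ne.
  apply: eq_sig_hprop => [? ? ?|]; first exact: proof_irrelevance.
  by rewrite /= eP eQ; apply: component_ext.
- move=> x; have [bx|nx] := classic (is_bound x).
  + by exists (exist _ (component k1) (ex_intro2 _ _ k1 nk1 erefl)); left.
  + by exists (exist _ (component x) (ex_intro2 _ _ x nx erefl)); right; apply: rst_refl.
Qed.
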